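(* Every graph $G=(V,E)$ on $n\ge2$ vertices can be decomposed into an edge-disjoint union of subgraphs $G_1\uplus G_2\uplus\cdots\uplus G_\ell$ such that (a) each vertex appears in at most $O(\log n)$ of the subgraphs, and (b) each subgraph $G_i$ is $2$-uniformly-dense.
   Context: A graph $H=(U,F)$ with $n_H=|U|$ vertices and $m_H=|F|$ edges is $\alpha$-uniformly-dense if (i) the minimum degree of $H$ is at least $1/\alpha$ times its average degree $2m_H/n_H$, and (ii) for every nonempty $S\subseteq U$, the average degree $2|F(S,S)|/|S|$ of the subgraph induced by $S$ is at most $\alpha$ times $2m_H/n_H$. Here $F(S,S)$ is the set of edges with both endpoints in $S$. *)

From mathcomp Require Import all_boot all_order all_algebra.
Set Implicit Arguments. Unset Strict Implicit. Unset Printing Implicit Defensive.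
Import Order.TTheory GRing.Theory Num.Theory.
Local Open Scope ring_scope.

Definition simple_edges (T : finType) (E : {set {set T}}) : Prop :=
  forall e, e \in E -> #|e| = 2.

Definition is_graph (T : finType) (U : {set T}) (F : {set {set T}}) : Prop :=
  simple_edges F /\ forall e, e \in F -> e \subset U.

Definition deg (T : finType) (F : {set {set T}}) (v : T) : nat :=
  #|[set e in F | v \in e]|.

Definition edges_in (T : finType) (F : {set {set T}}) (S : {set T}) : {set {set T}} :=
  [set e in F | e \subset S].

Definition avg_deg (T : finType) (U : {set T}) (F : {set {set T}}) : rat :=
  (2 * #|F|)%N%:R / #|U|%:R.

Definition uniformly_dense (T : finType) (alpha : rat)
    (U : {set T}) (F : {set {set T}}) : Prop :=
  (forall v, v \in U -> alpha^-1 * avg_deg U F <= (deg F v)%:R) /\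
  (forall S : {set T}, S \subset U -> S != set0 ->
     (2 * #|edges_in F S|)%N%:R / #|S|%:R <= alpha * avg_deg U F).

Definition edge_decomposition (T : finType) (E : {set {set T}})
    (Hs : seq ({set T} * {set {set T}})) : Prop :=
  (forall i, (i < size Hs)%N ->
     is_graph (nth (set0, set0) Hs i).1 (nth (set0, set0) Hs i).2 /\
     (nth (set0, set0) Hs i).2 \subset E) /\
  (forall i j, (i < size Hs)%N -> (j < size Hs)%N -> i <> j ->
     [disjoint (nth (set0, set0) Hs i).2 & (nth (set0, set0) Hs j).2]) /\
  (forall e, e \in E -> exists2 i, (i < size Hs)%N & e \in (nth (set0, set0) Hs i).2).

Definition appearances (T : finType) (Hs : seq ({set T} * {set {set T}})) (v : T) : nat :=
  count (fun H : {set T} * {set {set T}} => v \in H.1) Hs.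

From mathcomp Require Import all_boot all_order all_algebra.
From mathcomp Require Import zify.

Set Implicit Arguments. Unset Strict Implicit. Unset Printing Implicit Defensive.
Import Order.TTheory GRing.Theory Num.Theory.

(* Fix an orientation whose out-degrees are at most 2k.  While some vertex
   of out-degree > k reaches a vertex of out-degree < k by a directed path,
   reverse that path; this lowers the total excess of the out-degrees over k.
   Afterwards the set S of vertices that cannot reach out-degree < k is
   closed under out-edges and all its out-degrees are >= k.  Keeping exactly
   k out-edges at each vertex of S gives a subgraph on S with k|S| edges and
   minimum degree >= k, half its average degree; counting each edge at its
   tail, every S' spans at most k|S'| edges.  So this layer is 2-uniformly
   dense, and the remaining edges have out-degree <= k.  Any orientation has
   out-degrees <= n < 2^(j+1) for j = floor(log2 n), so halving k from 2^j
   down to 1 and adding the final layer of out-degree <= 1 (2-uniformly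
   dense on its support) covers all edges with j + 2 layers, and a vertex
   lies in at most one subgraph per layer. *)

Lemma exists_subset_card (T : finType) (A : {set T}) k :
  k <= #|A| -> exists2 B : {set T}, B \subset A & #|B| = k.
Proof.
case/card_geqP=> s [s_uniq s_size sA]; exists [set x in s].
  by apply/subsetP=> x; rewrite inE; apply: sA.
by rewrite cardsE -s_size; apply/card_uniqP.
Qed.

Lemma card_sum_fibers (I J : finType) (A : {set I}) (B : {set J}) (p : I -> J) :
  {in A, forall i, p i \in B} -> #|A| = \sum_(j in B) #|[set i in A | p i == j]|.
Proof.
move=> pAB; rewrite -sum1_card (partition_big p (mem B)) //=.
by apply: eq_bigr => j _; rewrite -sum1_card; apply: eq_bigl => i; rewrite inE.
Qed.

Lemma card_bigcup_le_sum (T I : finType) (P : pred I) (A : I -> {set T}) :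
  #|\bigcup_(i | P i) A i| <= \sum_(i | P i) #|A i|.
Proof.
apply: (big_rec2 (fun (B : {set T}) n => is_true (#|B| <= n))) => [|i B n _ Bn].
  by rewrite cards0.
exact: leq_trans (leq_card_setU _ B).1 (leq_add (leqnn _) Bn).
Qed.

Section Orientation.
Variable T : finType.
Implicit Types (E F A : {set {set T}}) (tl : {set T} -> T) (S U : {set T}).

(* An orientation of E is encoded by a tail [tl e] in each edge e; the head
   is the other endpoint. *)
Definition orients E tl := {in E, forall e, tl e \in e}.
Definition out_edges E tl v := [set e in E | tl e == v].
Definition outdeg E tl v := #|out_edges E tl v|.
Definition out_arc E tl : rel T :=
  fun y z => [exists e in E, (tl e == y) && (z \in e) && (z != y)].
Definition excess E tl k := \sum_v (outdeg E tl v - k).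
Definition redirect tl e0 x : {set T} -> T := fun e => if e == e0 then x else tl e.

Lemma simple_edges_sub E F : F \subset E -> simple_edges E -> simple_edges F.
Proof. by move=> FE Es e eF; apply/Es/(subsetP FE). Qed.

Lemma orients_sub E F tl : F \subset E -> orients E tl -> orients F tl.
Proof. by move=> FE tlE e eF; apply/tlE/(subsetP FE). Qed.

Lemma exists_orientation (x0 : T) E : simple_edges E -> exists tl, orients E tl.
Proof.
move=> Es; exists (fun e : {set T} => odflt x0 [pick x in e]) => e eE.
by case: pickP => // e0; move: (Es e eE); rewrite (eq_card0 e0).
Qed.

Lemma outdeg_le_deg F tl v : orients F tl -> outdeg F tl v <= deg F v.
Proof.
move=> tlF; apply: subset_leq_card; apply/subsetP=> e; rewrite !inE.
by case/andP=> eF /eqP <-; rewrite eF tlF.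
Qed.

Lemma deg_le_card E v : simple_edges E -> deg E v <= #|T|.
Proof.
move=> Es; set D := [set e in E | v \in e].
have inj_D : {in D &, injective (fun e => e :\ v)}.
  move=> e f; rewrite !inE => /andP[_ ve] /andP[_ vf] efv.
  by rewrite -(setD1K ve) -(setD1K vf) efv.
rewrite /deg -(card_in_imset inj_D) -cardsT -(card_imset [set: T] (@set1_inj T)).
apply: subset_leq_card; apply/subsetP=> _ /imsetP[e /[!inE] /andP[eE ve] ->].
have /cards1P[x ->] : #|e :\ v| == 1.
  by move: (cardsD1 v e); rewrite ve (Es e eE) add1n => -[<-].
exact: imset_f.
Qed.

Lemma outdeg_setD E F tl v :
  F \subset E -> outdeg (E :\: F) tl v = outdeg E tl v - outdeg F tl v.
Proof.
move=> FE; have outFE : out_edges F tl v \subset out_edges E tl v.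
  by apply/subsetP=> e; rewrite !inE => /andP[eF ->]; rewrite (subsetP FE).
rewrite /outdeg -(setIidPr outFE) -cardsD; apply: eq_card => e; rewrite !inE.
by case: (e \in F) (e \in E) (tl e == v) => [] [] [].
Qed.

Lemma card_le_outdeg F tl A S K : A \subset F -> {in A, forall e, tl e \in S} ->
  (forall v, outdeg F tl v <= K) -> #|A| <= K * #|S|.
Proof.
move=> AF tlAS outK; rewrite (card_sum_fibers tlAS) mulnC -sum_nat_const.
apply: leq_sum => v _; apply: leq_trans (outK v); apply: subset_leq_card.
by apply/subsetP=> e; rewrite !inE => /andP[eA ->]; rewrite (subsetP AF).
Qed.

Section Redirect.
Variables (E : {set {set T}}) (tl : {set T} -> T) (e0 : {set T}) (u x : T).
Hypotheses (e0E : e0 \in E) (tl_e0 : tl e0 = u).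

Lemma outdeg_redirect v :
  outdeg E (redirect tl e0 x) v + (v == u) = outdeg E tl v + (v == x).
Proof.
rewrite /outdeg (cardsD1 e0 (out_edges E _ v)) (cardsD1 e0 (out_edges E tl v)).
have -> : out_edges E (redirect tl e0 x) v :\ e0 = out_edges E tl v :\ e0.
  by apply/setP=> e; rewrite !inE /redirect; case: eqP.
rewrite !inE e0E /redirect eqxx tl_e0 [u == v]eq_sym [x == v]eq_sym /=.
by rewrite addnAC [RHS]addnAC [(v == x) + _]addnC.
Qed.

Lemma orients_redirect : orients E tl -> x \in e0 -> orients E (redirect tl e0 x).
Proof. by move=> tlE xe0 e eE; rewrite /redirect; case: eqP => [->|_]; auto. Qed.

Lemma out_arc_redirect y z : simple_edges E -> orients E tl -> x \in e0 ->
  y != u -> z != u -> out_arc E (redirect tl e0 x) y z = out_arc E tl y z.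
Proof.
move=> Es tlE xe0 yu zu; have ue0 : u \in e0 by rewrite -tl_e0 tlE.
apply/existsP/existsP=> -[e /andP[eE arc_e]]; exists e; rewrite eE /=;
  move: arc_e; rewrite /redirect; case: (eqVneq e e0) => [->|//]; last first.
  by rewrite tl_e0 [u == y]eq_sym (negbTE yu).
case/andP=> /andP[/eqP xy ze0] zx; subst y.
have /cards2P[a [b [_ e0ab]]] : #|e0| == 2 by rewrite Es.
move: ue0 xe0 ze0 zu zx yu; rewrite e0ab !inE.
by case/orP=> /eqP->; case/orP=> /eqP->; case/orP=> /eqP->; rewrite ?eqxx.
Qed.

End Redirect.

Lemma reverse_path E tl u p : simple_edges E -> orients E tl ->
  path (out_arc E tl) u p -> uniq (u :: p) ->
  exists2 tl', orients E tl' &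
    forall v, outdeg E tl' v + (v == u) = outdeg E tl v + (v == last u p).
Proof.
move=> Es; elim: p tl u => [|x p IHp] tl u tlE /=; first by exists tl.
case/andP=> /existsP[e0 /andP[e0E /andP[/andP[/eqP tl_e0 xe0] xu]]] path_xp.
rewrite in_cons negb_or => /andP[/andP[_ up] uniq_xp].
have tl1E := orients_redirect tlE xe0.
have path1 : path (out_arc E (redirect tl e0 x)) x p.
  rewrite (@eq_in_path _ [pred v | v != u] _ (out_arc E tl)) //.
    by move=> y z /[!inE] yu zu; apply: (out_arc_redirect e0E tl_e0).
  apply/allP=> y; rewrite /= in_cons => /orP[/eqP->|yp] //.
  by apply: contraNneq up => <-.
have [tl' tl'E shift'] := IHp _ _ tl1E path1 uniq_xp.
exists tl' => // v; have := outdeg_redirect x e0E tl_e0 v; have := shift' v; lia.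
Qed.

Lemma excess_transfer_lt E tl tl' k u b :
  (forall v, outdeg E tl' v + (v == u) = outdeg E tl v + (v == b)) ->
  k < outdeg E tl u -> outdeg E tl b < k -> excess E tl' k < excess E tl k.
Proof.
move=> shift uk bk; have bu : b != u by apply: contraTneq uk => <-; rewrite -leqNgt ltnW.
rewrite /excess (bigD1 u) //= [X in _ < X](bigD1 u) //= -addSn leq_add //.
  by have := shift u; rewrite eqxx eq_sym (negbTE bu); lia.
apply: leq_sum => v vu; have := shift v; rewrite (negbTE vu).
by case: (v =P b) => [->|_]; lia.
Qed.

Lemma balanced_orientation E tl k : simple_edges E -> orients E tl ->
  (forall v, outdeg E tl v <= 2 * k) ->
  exists tl', exists S, [/\ orients E tl', forall v, outdeg E tl' v <= 2 * k,
    {in E, forall e, tl' e \in S -> e \subset S},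
    {in S, forall v, k <= outdeg E tl' v} &
    forall v, v \notin S -> outdeg E tl' v <= k].
Proof.
move=> Es; have [n] := ubnP (excess E tl k).
elim: n tl => [//|n IHn] tl lt_n tlE tl2k.
pose reaches_low v := [exists b, (outdeg E tl b < k) && connect (out_arc E tl) v b].
have [/existsP[u /andP[uk /existsP[b /andP[bk /connectP[p up b_last]]]]] | stable] :=
  boolP [exists u, (k < outdeg E tl u) && reaches_low u].
  move: bk; rewrite b_last; case: (shortenP up) => p' up' uniq_up' _ bk.
  have [tl' tl'E shift] := reverse_path Es tlE up' uniq_up'.
  apply: (IHn tl') => //; first by have := excess_transfer_lt shift uk bk; lia.
  move=> v; have := shift v; have := tl2k v; move: bk.
  by case: (v =P last u p') => [<-|_]; case: (_ == u) => /=; lia.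
exists tl, [set v | ~~ reaches_low v]; split => //.
- move=> e eE; rewrite inE => tl_high; apply/subsetP => w we; rewrite inE.
  apply: contra tl_high => /existsP[b /andP[bk wb]]; apply/existsP; exists b.
  rewrite bk /=; have [<-|wtl] := eqVneq w (tl e); first by [].
  apply: connect_trans wb; apply: connect1; apply/existsP; exists e.
  by rewrite eE eqxx we wtl.
- move=> v; rewrite inE leqNgt; apply: contra => vk.
  by apply/existsP; exists v; rewrite vk connect0.
- move=> v; rewrite inE negbK => v_low; move: stable.
  by rewrite negb_exists => /forallP/(_ v); rewrite v_low andbT -leqNgt.
Qed.

Lemma uniformly_dense_of_orientation U F tl (K : nat) : orients F tl ->
  {in F, forall e : {set T}, e \subset U} -> (forall v, outdeg F tl v <= K) ->
  {in U, forall v, K <= deg F v} -> K * #|U| <= 2 * #|F| ->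
  uniformly_dense 2%:R U F.
Proof.
move=> tlF FU outK degK KU.
have tails_in A S : A \subset F -> {in A, forall e : {set T}, e \subset S} ->
    {in A, forall e, tl e \in S}.
  by move=> AF AS e eA; apply: (subsetP (AS e eA)); apply/tlF/(subsetP AF).
split=> [v vU | S SU S0].
  have U_gt0 : 0 < #|U| by apply/card_gt0P; exists v.
  have FKU : #|F| <= K * #|U|.
    exact: card_le_outdeg (subxx F) (tails_in _ _ (subxx F) FU) outK.
  rewrite /avg_deg natrM !mulrA mulVf // mul1r ler_pdivrMr ?ltr0n // -natrM ler_nat.
  by apply: leq_trans FKU _; rewrite leq_mul2r degK ?orbT.
have S_gt0 : 0 < #|S| by rewrite card_gt0.
have U_gt0 : 0 < #|U| by apply: leq_trans S_gt0 (subset_leq_card SU).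
have inS : edges_in F S \subset F by apply/subsetP=> e; rewrite inE => /andP[].
have ES : #|edges_in F S| <= K * #|S|.
  by apply: card_le_outdeg inS (tails_in _ _ inS _) outK => e; rewrite inE => /andP[].
apply: (@le_trans _ _ ((2 * K)%:R)%R).
  by rewrite ler_pdivrMr ?ltr0n // -natrM ler_nat; lia.
by rewrite /avg_deg mulrA ler_pdivlMr ?ltr0n // -!natrM ler_nat; lia.
Qed.

Lemma peel_layer E tl k : 0 < k -> simple_edges E -> orients E tl ->
  (forall v, outdeg E tl v <= 2 * k) ->
  exists S, exists F, exists tl', [/\ F \subset E, is_graph S F,
    uniformly_dense 2%:R S F, orients (E :\: F) tl' &
    forall v, outdeg (E :\: F) tl' v <= k].
Proof.
move=> k_gt0 Es tlE tl2k.
have [tl' [S [tl'E tl'2k S_closed S_high S_low]]] := balanced_orientation Es tlE tl2k.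
have /fin_all_exists2[B B_out B_card] : forall v, exists2 B : {set {set T}},
    B \subset out_edges E tl' v & #|B| = if v \in S then k else 0.
  move=> v; case: ifP => vS; last by exists set0; rewrite ?sub0set ?cards0.
  exact/exists_subset_card/S_high.
pose F := [set e in E | e \in B (tl' e)].
have FE : F \subset E by apply/subsetP=> e; rewrite inE => /andP[].
have out_F v : out_edges F tl' v = B v.
  apply/setP=> e; rewrite !inE; apply/idP/idP => [/andP[/andP[_ eB] /eqP <-] // | eB].
  by have := subsetP (B_out v) e eB; rewrite inE => /andP[-> /eqP->]; rewrite eB eqxx.
have outdeg_F v : outdeg F tl' v = if v \in S then k else 0 by rewrite /outdeg out_F.
have tl'F : orients F tl' := orients_sub FE tl'E.
have F_tails : {in F, forall e, tl' e \in S}.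
  move=> e /[!inE] /andP[_ eB]; apply: contraTT eB => eS.
  have := B_card (tl' e); rewrite (negbTE eS) => /eqP.
  by rewrite cards_eq0 => /eqP->; rewrite inE.
have FS : {in F, forall e : {set T}, e \subset S}.
  by move=> e eF; apply: S_closed (subsetP FE e eF) (F_tails e eF).
have card_F : #|F| = k * #|S|.
  rewrite (card_sum_fibers F_tails) mulnC -sum_nat_const; apply: eq_bigr => v vS.
  by have := outdeg_F v; rewrite vS.
exists S, F, tl'; split => //.
- by split; [apply: simple_edges_sub Es | apply: FS].
- apply: (uniformly_dense_of_orientation (K := k) tl'F FS).
  + by move=> v; rewrite outdeg_F; case: ifP.
  + by move=> v vS; have := outdeg_le_deg v tl'F; rewrite outdeg_F vS.
  + by rewrite card_F; lia.
- exact/(orients_sub _ tl'E)/subsetDl.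
- move=> v; rewrite outdeg_setD // outdeg_F.
  by case: ifP => vS; [have := tl'2k v; lia | rewrite subn0 S_low ?vS].
Qed.

Lemma uniformly_dense_outdeg1 E tl : simple_edges E -> orients E tl ->
  (forall v, outdeg E tl v <= 1) ->
  is_graph (\bigcup_(e in E) e) E /\ uniformly_dense 2%:R (\bigcup_(e in E) e) E.
Proof.
move=> Es tlE out1; set U := \bigcup_(e in E) e.
have EU : {in E, forall e : {set T}, e \subset U} by move=> e eE; apply: bigcup_sup.
split; first by [].
apply: (uniformly_dense_of_orientation (K := 1) tlE EU out1).
  by move=> v /bigcupP[e eE ve]; apply/card_gt0P; exists e; rewrite inE eE ve.
rewrite mul1n (leq_trans (card_bigcup_le_sum _ _)) //.
by rewrite mulnC -sum_nat_const; apply/eq_leq/eq_bigr => e eE; rewrite Es.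
Qed.

Lemma edge_decomposition_single U E : is_graph U E -> edge_decomposition E [:: (U, E)].
Proof.
move=> UE; split; first by case.
by split=> [[|i] [|j] | e eE] //; exists 0.
Qed.

Lemma edge_decomposition_cons E S F Hs : F \subset E -> is_graph S F ->
  edge_decomposition (E :\: F) Hs -> edge_decomposition E ((S, F) :: Hs).
Proof.
move=> FE SF [Hs_graph [Hs_disj Hs_cover]].
have F_disj i : i < size Hs -> [disjoint F & (nth (set0, set0) Hs i).2].
  case/Hs_graph=> _ /disjointWr; apply.
  by rewrite disjoints_subset setCD subsetUr.
split; [|split].
- case=> [|i] //= /Hs_graph[Hi /subset_trans HiE]; split=> //.
  exact/HiE/subsetDl.
- case=> [|i] [|j] //= lt_i lt_j neq_ij.
  + exact: F_disj.
  + by rewrite disjoint_sym; apply: F_disj.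
  + by apply: Hs_disj => // eq_ij; apply: neq_ij; rewrite eq_ij.
- move=> e eE; have [eF|eNF] := boolP (e \in F); first by exists 0.
  have [i lt_i ei] : exists2 i, i < size Hs & e \in (nth (set0, set0) Hs i).2.
    by apply: Hs_cover; rewrite inE eNF eE.
  by exists i.+1.
Qed.

Lemma layered_decomposition j E tl : simple_edges E -> orients E tl ->
  (forall v, outdeg E tl v <= 2 ^ j) ->
  exists Hs : seq ({set T} * {set {set T}}), [/\ size Hs <= j.+1,
    edge_decomposition E Hs & forall H, H \in Hs -> uniformly_dense 2%:R H.1 H.2].
Proof.
elim: j E tl => [|j IHj] E tl Es tlE outj.
  have [UE Udense] := uniformly_dense_outdeg1 Es tlE outj.
  exists [:: (\bigcup_(e in E) e, E)]; split=> //.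
    exact: edge_decomposition_single.
  by move=> H /[!inE] /eqP->.
have out2j v : outdeg E tl v <= 2 * 2 ^ j by rewrite -expnS.
have [S [F [tl' [FE SF Sdense tl'E tl'j]]]] := peel_layer (expn_gt0 2 j) Es tlE out2j.
have [Hs [size_Hs dec_Hs dense_Hs]] :=
  IHj _ _ (simple_edges_sub (subsetDl E F) Es) tl'E tl'j.
exists ((S, F) :: Hs); split => //; first exact: edge_decomposition_cons.
by move=> H /[!inE] /orP[/eqP-> | /dense_Hs].
Qed.

End Orientation.

Theorem mainTheorem6 :
  exists C : nat,
    forall (T : finType) (E : {set {set T}}),
      (2 <= #|T|)%N -> simple_edges E ->
      exists Hs : seq ({set T} * {set {set T}}),
        edge_decomposition E Hs /\
        (forall v : T, (appearances Hs v <= C * trunc_log 2 #|T|)%N) /\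
        (forall H, H \in Hs -> uniformly_dense (2%:R : rat)%R H.1 H.2).
Proof.
exists 3 => T E T_ge2 Es.
have /card_gt0P[x0 _] : 0 < #|T| by apply: leq_trans T_ge2.
have [tl tlE] := exists_orientation x0 Es.
set J := trunc_log 2 #|T|.
have T_lt : #|T| < 2 ^ J.+1 by apply: trunc_log_ltn.
have J_gt0 : 0 < J by rewrite trunc_log_gt0.
have outJ v : outdeg E tl v <= 2 ^ J.+1.
  by rewrite (leq_trans (outdeg_le_deg v tlE)) // (leq_trans (deg_le_card v Es)) // ltnW.
have [Hs [size_Hs dec_Hs dense_Hs]] := layered_decomposition Es tlE outJ.
exists Hs; split=> //; split=> // v.
by rewrite (leq_trans (count_size _ _)) // (leq_trans size_Hs) //; lia.
Qed.
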